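(* Let $G$ be a compactly generated, totally disconnected, locally compact group, let $\Gamma$ be a Cayley–Abels graph for $G$ of degree $d$, let $K$ be the kernel of the action of $G$ on $\Gamma$, and let $L\le S_d$ be the local action of $G$ on $\Gamma$. If $A$ belongs to the local simple content of $G/K$, then $A$ is a subquotient of a point stabilizer of $L$: there exist $i\in\{1,\dots,d\}$ and subgroups $N\trianglelefteq H\le L_i$ with $H/N\cong A$, where $L_i$ is the stabilizer of $i$ in $L$. In particular $A$ is isomorphic to a subquotient of $S_{d-1}$.
   Context: A Cayley–Abels graph for a totally disconnected, locally compact group $G$ is a connected, locally finite simple graph $\Gamma$ with an action of $G$ by automorphisms (not necessarily faithful) that is vertex-transitive with compact open vertex stabilizers. The local action is the permutation group, viewed as a subgroup of $S_d$ up to conjugacy, induced by a vertex stabilizer $G_\alpha$ on the neighbourhood $\Gamma(\alpha)$. A subquotient of a group is a quotient of one of its subgroups. For a second countable profinite group, a composition series is a countable descending chain of closed subgroups, each normal in the previous, with trivial intersection and simple (finite) successive quotients; its composition factors are independent of the series. The local simple content of a second countable, totally disconnected, locally compact group is the set of isomorphism classes of finite simple groups that are composition factors of every compact open subgroup. *)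

From HB Require Import structures.
From mathcomp Require Import all_boot all_order all_algebra all_fingroup all_solvable.
From mathcomp Require Import all_classical all_reals all_analysis.
From Stdlib Require Import Relations.

Set Implicit Arguments.
Unset Strict Implicit.
Unset Printing Implicit Defensive.

Local Open Scope classical_set_scope.

Record tgroup (G : topologicalType) := TGroup {
  tmul : G -> G -> G;
  tinv : G -> G;
  tone : G;
  tmulA : forall x y z, tmul x (tmul y z) = tmul (tmul x y) z;
  tmul1g : forall x, tmul tone x = x;
  tmulVg : forall x, tmul (tinv x) x = tone;
  tmul_cont : continuous (fun p : G * G => tmul p.1 p.2);
  tinv_cont : continuous tinv }.

Section TGroupDefs.
Variables (G : topologicalType) (TG : tgroup G).

Definition is_subgroup (S : set G) : Prop :=
  S (tone TG) /\ forall x y, S x -> S y -> S (tmul TG x (tinv TG y)).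

Definition normal_in (N S : set G) : Prop :=
  is_subgroup N /\ N `<=` S /\
  forall g n, S g -> N n -> N (tmul TG (tinv TG g) (tmul TG n g)).

Definition gen_subgroup (C : set G) : set G :=
  fun x => forall S, is_subgroup S -> C `<=` S -> S x.

Definition compactly_generated : Prop :=
  exists C : set G, compact C /\ gen_subgroup C = setT.

Definition tdlc : Prop :=
  totally_disconnected (@setT G) /\ locally_compact (@setT G).

(* S / T is isomorphic to the finite group A (T normal in S):
   there is a homomorphism S -> A, onto A, whose kernel is T. *)
Definition quotient_iso (S T : set G) (gT : finGroupType) (A : {group gT}) :
  Prop :=
  exists f : G -> gT,
    (forall x y, S x -> S y -> f (tmul TG x y) = (f x * f y)%g) /\
    (forall a, a \in A <-> exists2 x, S x & f x = a) /\
    (forall x, S x -> (f x = 1%g <-> T x)).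

(* Repetitions s (n+1) = s n are allowed (padding, so that finite chains
   can also be indexed by nat); they contribute no composition factor. *)
Definition comp_series (U : set G) (s : nat -> set G) : Prop :=
  s 0%N = U /\
  (forall n, closed (s n.+1) /\ normal_in (s n.+1) (s n) /\
     (s n.+1 = s n \/
      exists (gT : finGroupType) (B : {group gT}),
        simple B /\ quotient_iso (s n) (s n.+1) B)) /\
  \bigcap_n s n = [set tone TG].

Definition composition_factor (U : set G) (gT : finGroupType)
  (A : {group gT}) : Prop :=
  exists s, comp_series U s /\
    exists n, s n.+1 <> s n /\ quotient_iso (s n) (s n.+1) A.

Definition compact_open_subgroup (U : set G) : Prop :=
  compact U /\ open U /\ is_subgroup U.

Definition local_simple_content (gT : finGroupType) (A : {group gT}) : Prop :=
  simple A /\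
  forall U, compact_open_subgroup U -> composition_factor U A.

End TGroupDefs.

Section Graphs.
Variables (V : Type) (adj : V -> V -> Prop).

Definition simple_graph : Prop :=
  (forall x y, adj x y -> adj y x) /\ (forall x, ~ adj x x).

Definition graph_connected : Prop :=
  forall x y, clos_refl_trans V adj x y.

Definition locally_finite : Prop :=
  forall x, finite_set [set y | adj x y].

Definition nbhd_enum (x : V) (d : nat) (e : 'I_d -> V) : Prop :=
  injective e /\ forall y, adj x y <-> exists i, e i = y.

Definition regular_of_degree (d : nat) : Prop :=
  forall x, exists e : 'I_d -> V, nbhd_enum x e.
End Graphs.

Section Action.
Variables (G : topologicalType) (TG : tgroup G) (V : Type)
  (adj : V -> V -> Prop) (act : G -> V -> V).

Definition is_graph_action : Prop :=
  (forall v, act (tone TG) v = v) /\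
  (forall g h v, act (tmul TG g h) v = act g (act h v)) /\
  (forall g x y, adj x y <-> adj (act g x) (act g y)).

Definition vstab (v : V) : set G := [set g | act g v = v].

Definition cayley_abels : Prop :=
  simple_graph adj /\ graph_connected adj /\ locally_finite adj /\
  is_graph_action /\
  (forall u v, exists g, act g u = v) /\
  (forall v, compact (vstab v) /\ open (vstab v)).

Definition action_kernel : set G := [set g | forall v, act g v = v].

Definition local_action (a : V) (d : nat) (e : 'I_d -> V)
  (L : {group {perm 'I_d}}) : Prop :=
  nbhd_enum adj a e /\
  forall s : {perm 'I_d}, s \in L <->
    exists g, act g a = a /\ forall i, act g (e i) = e (s i).
End Action.

Definition is_quotient_group (G : topologicalType) (TG : tgroup G)
  (K : set G) (Q : topologicalType) (TQ : tgroup Q) (pi : G -> Q) : Prop :=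
  (forall x y, pi (tmul TG x y) = tmul TQ (pi x) (pi y)) /\
  (forall q, exists g, pi g = q) /\
  continuous pi /\
  (forall O : set G, open O -> open (pi @` O)) /\
  (forall g, pi g = tone TQ <-> K g).

From HB Require Import structures.
From mathcomp Require Import all_boot all_order all_algebra all_fingroup all_solvable.
From mathcomp Require Import all_classical all_reals all_analysis.
From Stdlib Require Import ClassicalEpsilon Relations.

(* Enumerate the vertices as w 0 = a, w 1, ..., each w (n+1) being equal or
   adjacent to w (n %/ d), and let Fix m be the pointwise stabilizer of the
   closed neighbourhoods of w 0, ..., w m.  This is a descending chain of
   closed subgroups, Fix 0 is compact and open, Fix m normalizes Fix (m+1),
   and the intersection of the chain is the kernel K.  So U = pi (Fix 0) is a
   compact open subgroup of G/K, and A is a composition factor of U; pulled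
   back to G this is an epimorphism h : T -> A with closed kernel T'.
   By compactness some Fix M meets T inside T'.  Since A is simple and the
   image of Fix (m+1) in A is normal in the image of Fix m, there is a step m
   at which h maps Fix m /\ T onto A but kills Fix (m+1) /\ T.  Now Fix m /\ T
   fixes v = w (m+1) and a neighbour of it, and whatever acts trivially on the
   neighbourhood of v lies in Fix (m+1); so h factors through the local action
   at v, which conjugated to a is a point stabilizer of L.  Finally a point
   stabilizer in S_d is a copy of S_(d-1). *)

Set Implicit Arguments.
Unset Strict Implicit.
Unset Printing Implicit Defensive.

Local Open Scope classical_set_scope.

Lemma compact_nested_closed (T : topologicalType) (C : set T)
    (F : nat -> set T) :
  compact C -> (forall m, closed (F m)) ->
  (forall m n, (m <= n)%N -> F n `<=` F m) ->
  (forall m, (C `&` F m) !=set0) -> exists p, C p /\ forall m, F m p.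
Proof.
move=> cC clF decF ne.
pose Fil := filter_from setT (fun m => C `&` F m).
have FilF : Filter Fil.
  apply: filter_from_filter; first by exists 0%N.
  move=> i j _ _; exists (maxn i j) => // x [Cx Fx]; split; split=> //.
    by apply: (decF i (maxn i j)) => //; rewrite leq_maxl.
  by apply: (decF j (maxn i j)) => //; rewrite leq_maxr.
have FilP : ProperFilter Fil by apply: filter_from_proper => i _; exact: ne.
have [|p [Cp clp]] := cC Fil FilP; first by exists 0%N => // x [].
exists p; split=> // m; apply: contrapT => nFm.
have nb : nbhs p (~` F m).
  by apply: open_nbhs_nbhs; split=> //; apply: closed_openC.
have Fil_m : Fil (C `&` F m) by exists m.
by have [x [[_ Fx] nFx]] := clp _ _ Fil_m nb.
Qed.

Lemma open_bigcap_finite (T : topologicalType) (I : finType) (f : I -> set T) :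
  (forall i, open (f i)) -> open (\bigcap_(i in [set: I]) f i).
Proof.
move=> of_open.
have -> : \bigcap_(i in [set: I]) f i = ~` \bigcup_(i in [set: I]) ~` f i.
  by rewrite setC_bigcup; apply: eq_bigcapr => i _; rewrite setCK.
rewrite openC; apply: closed_bigcup; first exact: finite_finset.
by move=> i _; apply: open_closedC.
Qed.

Section TopologicalGroup.
Variables (G : topologicalType) (TG : tgroup G).
Local Notation "x ** y" := (tmul TG x y) (at level 40, left associativity).
Local Notation inv := (tinv TG).
Local Notation one := (tone TG).
Local Notation subgroup := (is_subgroup TG).
Let mulA := tmulA TG.
Let mul1 := tmul1g TG.
Let mulV := tmulVg TG.

Lemma tmulgV x : x ** inv x = one.
Proof.
have e : inv x ** (x ** inv x) = inv x by rewrite mulA mulV mul1.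
by rewrite -[LHS]mul1 -(mulV (inv x)) -mulA e mulV.
Qed.

Lemma tmulg1 x : x ** one = x.
Proof. by rewrite -(mulV x) mulA tmulgV mul1. Qed.

Lemma tmulKg x y : inv x ** (x ** y) = y.
Proof. by rewrite mulA mulV mul1. Qed.

Lemma tmulKVg x y : x ** (inv x ** y) = y.
Proof. by rewrite mulA tmulgV mul1. Qed.

Lemma tinv_uniq x y : x ** y = one -> y = inv x.
Proof. by move=> h; rewrite -(tmulKg x y) h tmulg1. Qed.

Lemma tinvK x : inv (inv x) = x.
Proof. by apply/esym/tinv_uniq; rewrite mulV. Qed.

Lemma tinvM x y : inv (x ** y) = inv y ** inv x.
Proof. by apply/esym/tinv_uniq; rewrite -mulA (mulA y) tmulgV mul1 tmulgV. Qed.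

Lemma subgroup1 S : subgroup S -> S one.
Proof. by case. Qed.

Lemma subgroupV S x : subgroup S -> S x -> S (inv x).
Proof. by move=> [S1 SM] Sx; have := SM _ _ S1 Sx; rewrite mul1. Qed.

Lemma subgroupM S x y : subgroup S -> S x -> S y -> S (x ** y).
Proof.
by move=> hS Sx Sy; have := (proj2 hS) _ _ Sx (subgroupV hS Sy); rewrite tinvK.
Qed.

Lemma subgroupI S S' : subgroup S -> subgroup S' -> subgroup (S `&` S').
Proof.
move=> hS hS'; split; first by split; apply: subgroup1.
by move=> x y [Sx S'x] [Sy S'y]; split; [apply: (proj2 hS) | apply: (proj2 hS')].
Qed.

Lemma lmul_continuous g : continuous (fun y => g ** y).
Proof.
move=> y; apply: (@continuous2_cvg _ _ _ _ _ _ (fun _ => g) id (tmul TG) g y).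
- exact: (@tmul_cont _ TG (g, y)).
- exact: cvg_cst.
- exact: cvg_id.
Qed.

Lemma closed_translate S g : closed S -> closed ((fun y => g ** y) @^-1` S).
Proof. by move=> cS; move: (@lmul_continuous g) => /continuous_closedP; apply. Qed.

(* An open subgroup is closed: its complement is a union of open cosets. *)
Lemma open_subgroup_closed S : subgroup S -> open S -> closed S.
Proof.
move=> hS oS; rewrite -openC.
have -> : ~` S = \bigcup_(g in ~` S) ((fun y => inv g ** y) @^-1` S).
  rewrite eqEsubset; split=> x.
    by move=> nSx; exists x => //=; rewrite mulV; exact: subgroup1.
  move=> [g nSg /= Sgx] Sx; apply: nSg.
  by have := subgroupM hS Sx (subgroupV hS Sgx); rewrite tinvM tinvK tmulKVg.
by apply: bigcup_open => g _; move: (@lmul_continuous (inv g)) => /continuousP; apply.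
Qed.

Section HomToFinGroup.
Variables (gT : finGroupType) (S : set G) (h : G -> gT).
Hypothesis hS : subgroup S.
Hypothesis hM : forall x y, S x -> S y -> h (x ** y) = (h x * h y)%g.

Lemma fhom1 : h one = 1%g.
Proof.
have S1 := subgroup1 hS; have := hM S1 S1; rewrite tmul1g => e1.
by apply: (@mulIg _ (h one)); rewrite -e1 mul1g.
Qed.

Lemma fhomV x : S x -> h (inv x) = (h x)^-1%g.
Proof.
move=> Sx; apply: (@mulgI _ (h x)); rewrite mulgV -hM ?tmulgV ?fhom1 //.
exact: subgroupV.
Qed.

(* If the kernel T' of h is closed, then so is S minus T': it is the finite
   union of the translates x * T' with h x <> 1. *)
Lemma closed_setD_kernel (T' : set G) :
  closed T' -> T' `<=` S -> (forall x, S x -> (h x = 1%g <-> T' x)) ->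
  closed (S `&` ~` T').
Proof.
move=> clT' T'S hK.
pose B := [set b : gT | b <> 1%g /\ exists x, S x /\ h x = b].
pose xb b := epsilon (inhabits one) (fun x => S x /\ h x = b).
have xbP b : B b -> S (xb b) /\ h (xb b) = b.
  by move=> [_ ex]; exact: (epsilon_spec (inhabits one) _ ex).
have -> : S `&` ~` T' = \bigcup_(b in B) ((fun y => inv (xb b) ** y) @^-1` T').
  rewrite eqEsubset; split=> x.
    move=> [Sx nT'x]; have Bx : B (h x).
      by split; [move/(hK _ Sx) | exists x].
    exists (h x) => //; have [Sxb hxb] := xbP _ Bx.
    have S_x : S (inv (xb (h x)) ** x) by apply: subgroupM (subgroupV hS Sxb) Sx.
    by apply/(hK _ S_x); rewrite hM ?fhomV ?hxb ?mulVg //; exact: subgroupV.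
  move=> [b Bb /= T'y]; have [Sxb hxb] := xbP _ Bb.
  have Sy := T'S _ T'y.
  have Sx : S x by rewrite -(tmulKVg (xb b) x); exact: subgroupM Sxb Sy.
  split=> // T'x; apply: (proj1 Bb).
  have := (proj2 (hK _ Sx)) T'x; rewrite -(tmulKVg (xb b) x) hM // hxb.
  by rewrite (proj2 (hK _ Sy) T'y) mulg1.
apply: closed_bigcup; first exact: finite_finset.
by move=> b _; apply: closed_translate.
Qed.

End HomToFinGroup.

End TopologicalGroup.

Section TopologicalGroupHom.
Variables (G Q : topologicalType) (TG : tgroup G) (TQ : tgroup Q) (pi : G -> Q).
Local Notation "x ** y" := (tmul TG x y) (at level 40, left associativity).
Local Notation inv := (tinv TG).
Local Notation one := (tone TG).
Hypothesis piM : forall x y, pi (x ** y) = tmul TQ (pi x) (pi y).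

Lemma thom1 : pi one = tone TQ.
Proof.
have h := piM one one; rewrite tmul1g in h.
by rewrite -{1}(tmulKg TQ (pi one) (pi one)) -h tmulVg.
Qed.

Lemma thomV x : pi (inv x) = tinv TQ (pi x).
Proof. by apply: tinv_uniq; rewrite -piM tmulgV thom1. Qed.

Lemma thom_preimage_subgroup (S : set Q) :
  is_subgroup TQ S -> is_subgroup TG (pi @^-1` S).
Proof.
move=> hS; split; first by rewrite /= thom1; exact: (subgroup1 hS).
by move=> x y Sx Sy; rewrite /= piM thomV; exact: (proj2 hS).
Qed.

Lemma thom_image_subgroup (S : set G) : is_subgroup TG S -> is_subgroup TQ (pi @` S).
Proof.
move=> hS; split; first by exists one; [exact: subgroup1 | exact: thom1].
move=> _ _ [x Sx <-] [y Sy <-]; exists (x ** inv y); last by rewrite piM thomV.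
exact: (proj2 hS).
Qed.

End TopologicalGroupHom.

Section SimpleDescent.
Variables (G : topologicalType) (TG : tgroup G) (gT : finGroupType).
Variables (F : nat -> set G) (T : set G) (h : G -> gT) (A : {group gT}).
Local Notation "x ** y" := (tmul TG x y) (at level 40, left associativity).
Local Notation inv := (tinv TG).
Local Notation one := (tone TG).
Hypothesis hF : forall m, is_subgroup TG (F m).
Hypothesis hFnorm : forall m x y, F m x -> F m.+1 y -> F m.+1 (inv x ** y ** x).
Hypothesis hT : is_subgroup TG T.
Hypothesis hM : forall x y, T x -> T y -> h (x ** y) = (h x * h y)%g.
Hypothesis hTA : forall x, T x -> h x \in A.
Hypothesis hsA : simple A.

Definition onto_at m := forall b, b \in A -> exists x, [/\ F m x, T x & h x = b].

(* The image of F (m+1) /\ T is normal in the image A of F m /\ T, and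
   proper, hence trivial. *)
Lemma descent_step m :
  onto_at m -> ~ onto_at m.+1 -> forall x, F m.+1 x -> T x -> h x = 1%g.
Proof.
move=> ontom nonto.
pose B := [set b : gT | `[< exists x, [/\ F m.+1 x, T x & h x = b] >]]%SET.
have memB b : b \in B <-> exists x, [/\ F m.+1 x, T x & h x = b].
  by rewrite inE; split => /asboolP.
have gB : group_set B.
  apply/group_setP; split.
    by apply/memB; exists one; rewrite (fhom1 hT hM); split=> //; apply: subgroup1.
  move=> b1 b2 /memB[x1 [F1 T1 <-]] /memB[x2 [F2 T2 <-]]; apply/memB.
  by exists (x1 ** x2); split; [exact: subgroupM | exact: subgroupM | exact: hM].
pose Bg := group gB.
have BA : Bg \subset A.
  by apply/fintype.subsetP => b /memB[x [_ Tx <-]]; exact: hTA.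
have nBA : normal Bg A.
  apply/andP; split => //; apply/normsP => b bA.
  have [y [Fy Ty hy]] := ontom b bA.
  apply/eqP; rewrite eqEcard cardJg leqnn andbT; apply/fintype.subsetP => c.
  rewrite mem_conjg => /memB[x [Fx Tx hx]]; apply/memB.
  have Tyi := subgroupV hT Ty.
  have Tyx : T (inv y ** x) by exact: subgroupM.
  exists (inv y ** x ** y); split; [exact: hFnorm | exact: subgroupM |].
  by rewrite hM // hM // (fhomV hT hM) // hy hx -mulgA -conjgE conjgKV.
have [_ simpA] := simpleP _ hsA.
case: (simpA _ nBA) => hB x Fx Tx.
  suff : h x \in Bg by rewrite hB => /set1P.
  by apply/memB; exists x.
exfalso; apply: nonto => b bA.
by have /memB : b \in Bg by rewrite hB.
Qed.

Lemma simple_descent M :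
  onto_at 0 -> ~ onto_at M ->
  exists m, onto_at m /\ forall x, F m.+1 x -> T x -> h x = 1%g.
Proof.
move=> onto0; elim: M => [|M IH] // nontoS.
case: (pselect (onto_at M)) => [ontoM|]; last exact: IH.
by exists M; split=> //; exact: descent_step.
Qed.

(* If the F m are closed, decreasing, inside a compact F 0, and meet T in the
   kernel T' of h only in the limit, then h is eventually not onto: otherwise
   the compact set T \ T' would meet every F m, hence their intersection. *)
Lemma eventually_not_onto (T' : set G) :
  compact (F 0) -> (forall m, closed (F m)) ->
  (forall m n, (m <= n)%N -> F n `<=` F m) -> T `<=` F 0 ->
  closed T' -> T' `<=` T -> (forall x, T x -> (h x = 1%g <-> T' x)) ->
  (forall x, T x -> (forall m, F m x) -> T' x) ->
  exists M, ~ onto_at M.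
Proof.
move=> cF0 clF decF TF0 clT' T'T hK hlim; apply: contrapT => onto_all.
have cC : compact (T `&` ~` T').
  apply: (subclosed_compact (closed_setD_kernel hT hM clT' T'T hK) cF0).
  by move=> x [Tx _]; exact: TF0.
have [b bA b1] : exists2 b, b \in A & b != 1%g.
  by apply/trivgPn; have [] := simpleP _ hsA.
have meets m : (T `&` ~` T' `&` F m) !=set0.
  have ontom : onto_at m by apply: contrapT => nonto; apply: onto_all; exists m.
  have [x [Fx Tx hx]] := ontom b bA.
  exists x; split=> //; split=> // /(hK _ Tx) hx1.
  by move: b1; rewrite -hx hx1 eqxx.
have [p [[Tp nT'p] Fp]] := compact_nested_closed cC clF decF meets.
exact/nT'p/hlim.
Qed.

End SimpleDescent.

Section GraphAction.
Variables (G : topologicalType) (TG : tgroup G) (V : Type)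
  (adj : V -> V -> Prop) (act : G -> V -> V).
Hypothesis hact : is_graph_action TG adj act.
Local Notation "x ** y" := (tmul TG x y) (at level 40, left associativity).
Local Notation inv := (tinv TG).
Local Notation one := (tone TG).

Lemma gact1 v : act one v = v.
Proof. by case: hact. Qed.

Lemma gactM g h v : act (g ** h) v = act g (act h v).
Proof. by case: hact => _ []. Qed.

Lemma gadj_act g x y : adj x y <-> adj (act g x) (act g y).
Proof. by case: hact => _ []. Qed.

Lemma gactK g v : act (inv g) (act g v) = v.
Proof. by rewrite -gactM tmulVg gact1. Qed.

Lemma gactKV g v : act g (act (inv g) v) = v.
Proof. by rewrite -gactM tmulgV gact1. Qed.

Lemma gact_inj g : injective (act g).
Proof. by move=> x y h; rewrite -(gactK g x) h gactK. Qed.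

Lemma vstab_subgroup v : is_subgroup TG (vstab act v).
Proof.
split; first exact: gact1.
by move=> x y; rewrite /vstab /= => hx hy; rewrite gactM -{1}hy gactK.
Qed.

Lemma nbhd_translate d a (e : 'I_d -> V) g v u :
  nbhd_enum adj a e -> act g a = v -> adj v u <-> exists i, u = act g (e i).
Proof.
move=> hnb <-; rewrite -{1}(gactKV g u) -gadj_act (proj2 hnb).
split=> [[i hi]|[i ->]]; exists i; first by rewrite hi gactKV.
by rewrite gactK.
Qed.

End GraphAction.

(* An enumeration w 0 = a, w 1, w 2, ... of the vertices of a connected
   vertex-transitive graph of degree d, in which w (n+1) is w (n %/ d) or one
   of its neighbours: the (n %% d)-th neighbour of w (n %/ d), read through a
   fixed element gv v mapping a to v. *)
Section VertexEnumeration.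
Variables (G : topologicalType) (TG : tgroup G) (V : Type)
  (adj : V -> V -> Prop) (act : G -> V -> V) (d : nat) (a : V) (e : 'I_d -> V).
Hypothesis hact : is_graph_action TG adj act.
Hypothesis htrans : forall u v, exists g, act g u = v.
Hypothesis hnb : nbhd_enum adj a e.

Definition gv (v : V) : G := epsilon (inhabits (tone TG)) (fun g => act g a = v).

Lemma gvP v : act (gv v) a = v.
Proof. exact: (epsilon_spec _ (fun g => act g a = v) (htrans a v)). Qed.

Lemma nbrsP v u : adj v u <-> exists i, u = act (gv v) (e i).
Proof. by apply: (nbhd_translate hact u hnb (gvP v)). Qed.

Definition nbr (v : V) (r : nat) : V :=
  if insub r is Some i then act (gv v) (e i) else v.

(* wf f n computes w n by recursion with fuel f > n. *)
Fixpoint wf (f n : nat) : V :=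
  if f is f'.+1 then
    if n is n'.+1 then nbr (wf f' (n' %/ d)) (n' %% d) else a
  else a.

Definition w n := wf n.+1 n.

Lemma wf_fuel f f' n : (n < f)%N -> (n < f')%N -> wf f n = wf f' n.
Proof.
elim: f f' n => [|f IH] [|f'] [|n] //= lt_n_f lt_n_f'.
by rewrite (IH f') // (leq_ltn_trans (leq_div _ _)).
Qed.

Lemma wS n : w n.+1 = nbr (w (n %/ d)) (n %% d).
Proof.
rewrite /w; change (wf n.+2 n.+1) with (nbr (wf n.+1 (n %/ d)) (n %% d)).
by rewrite (@wf_fuel n.+1 (n %/ d).+1) // ltnS leq_div.
Qed.

Lemma wS_nb n : w n.+1 = w (n %/ d) \/ adj (w (n %/ d)) (w n.+1).
Proof.
rewrite wS /nbr; case: insubP => [i _ _|_]; last by left.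
by right; apply/nbrsP; exists i.
Qed.

Lemma w_onto : graph_connected adj -> forall u, exists n, w n = u.
Proof.
move=> hconn u; elim: (clos_rt_rtn1 _ _ _ _ (hconn a u)) => [|y z ayz _ [n wn]].
  by exists 0%N.
move/nbrsP: ayz => [i ->].
have d_gt0 : (0 < d)%N by apply: leq_ltn_trans (ltn_ord i).
exists (n * d + i).+1; rewrite wS divnMDl // modnMDl divn_small // modn_small //.
rewrite addn0 wn /nbr insubT //= => ip; congr (act _ (e _)); exact: val_inj.
Qed.

End VertexEnumeration.

Section Filtration.
Variables (G : topologicalType) (TG : tgroup G) (V : Type)
  (adj : V -> V -> Prop) (act : G -> V -> V) (d : nat) (a : V) (e : 'I_d -> V).
Hypothesis hCA : cayley_abels TG adj act.
Hypothesis hnb : nbhd_enum adj a e.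
Local Notation "x ** y" := (tmul TG x y) (at level 40, left associativity).
Local Notation inv := (tinv TG).

Let hact : is_graph_action TG adj act.
Proof. by case: hCA => _ [_ [_ []]]. Qed.
Let htrans : forall u v, exists g, act g u = v.
Proof. by case: hCA => _ [_ [_ [_ []]]]. Qed.
Let hstab : forall v, compact (vstab act v) /\ open (vstab act v).
Proof. by case: hCA => _ [_ [_ [_ []]]]. Qed.

Local Notation w := (w TG act a e).

Definition Nb v u := u = v \/ adj v u.

Definition Fix m : set G :=
  [set x | forall j, (j <= m)%N -> forall u, Nb (w j) u -> act x u = u].

Lemma Fix_subgroup m : is_subgroup TG (Fix m).
Proof.
split=> [j _ u _|x y Fx Fy j jm u hu]; first exact: (gact1 hact).
by rewrite (gactM hact) -{1}(Fy j jm u hu) (gactK hact) (Fx j jm u hu).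
Qed.

Lemma vstab_closed v : closed (vstab act v).
Proof. exact: open_subgroup_closed (vstab_subgroup hact v) (proj2 (hstab v)). Qed.

(* Fix m is an intersection of vertex stabilizers, which are open, hence
   closed, subgroups. *)
Lemma Fix_closed m : closed (Fix m).
Proof.
have -> : Fix m = \bigcap_(p in [set p : nat * V | (p.1 <= m)%N /\ Nb (w p.1) p.2])
   vstab act p.2.
  rewrite eqEsubset; split=> x hx.
    by move=> [j u] /= [jm hu]; exact: (hx j jm u hu).
  by move=> j jm u hu; apply: (hx (j, u)).
by apply: closed_bigI => p _; exact: vstab_closed.
Qed.

Lemma Fix_decr m n : (m <= n)%N -> Fix n `<=` Fix m.
Proof. by move=> mn x hx j jm; apply: hx; exact: leq_trans jm mn. Qed.

Lemma Fix_succ m x :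
  Fix m x -> (forall u, Nb (w m.+1) u -> act x u = u) -> Fix m.+1 x.
Proof.
move=> Fx fixS j; rewrite leq_eqVlt ltnS => /orP[/eqP -> //|]; exact: Fx.
Qed.

Lemma Fix0E : Fix 0 = vstab act a `&` \bigcap_(i in [set: 'I_d]) vstab act (e i).
Proof.
rewrite eqEsubset; split=> x.
  move=> hx; split; first by apply: (hx 0%N) => //; left.
  by move=> i _; apply: (hx 0%N) => //; right; apply/(proj2 hnb); exists i.
move=> [ha he] j; rewrite leqn0 => /eqP -> u [->|/(proj2 hnb) [i <-]] //.
exact: he.
Qed.

Lemma Fix0_open : open (Fix 0).
Proof.
rewrite Fix0E; apply: openI; first exact: (proj2 (hstab a)).
by apply: open_bigcap_finite => i; exact: (proj2 (hstab (e i))).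
Qed.

Lemma Fix0_compact : compact (Fix 0).
Proof.
apply: (subclosed_compact (@Fix_closed 0) (proj1 (hstab a))).
by rewrite Fix0E => x [].
Qed.

(* Fix m fixes w (m+1), which equals or is adjacent to w (m %/ d). *)
Lemma Fix_next m x : Fix m x -> act x (w m.+1) = w m.+1.
Proof.
move=> Fx; apply: (Fx (m %/ d)); first exact: leq_div.
by case: (wS_nb hact htrans hnb m) => [->|]; [left | right].
Qed.

(* Fix m normalizes Fix (m+1): an element of Fix m fixes w (m+1), so it
   permutes the closed neighbourhood of w (m+1). *)
Lemma Fix_norm m x y : Fix m x -> Fix m.+1 y -> Fix m.+1 (inv x ** y ** x).
Proof.
move=> Fx Fy; apply: Fix_succ => [j jm u hu|u hu]; rewrite !(gactM hact).
  have xu := Fx j jm u hu.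
  by rewrite xu (Fy j (leqW jm) u hu) -{1}xu (gactK hact).
have hxu : Nb (w m.+1) (act x u).
  case: hu => [->|hu]; first by left; exact: Fix_next.
  by right; rewrite -(Fix_next Fx) -(gadj_act hact).
by rewrite (Fy m.+1 (leqnn _) _ hxu) (gactK hact).
Qed.

Lemma Fix_kernel x : (forall m, Fix m x) -> action_kernel act x.
Proof.
move=> hx u; have [n <-] := w_onto hact htrans hnb (proj1 (proj2 hCA)) u.
by apply: (hx n n) => //; left.
Qed.

End Filtration.

(* Let X be a subgroup fixing a
   vertex v = g a and a neighbour u0 of v, and h an epimorphism from X onto A
   killing whatever acts trivially on the neighbourhood of v.  Conjugated by
   g, the action of X on the neighbourhood of v is a subgroup H of L fixing
   the index of g^-1 u0, and h induces an epimorphism from H onto A. *)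
Section LocalFactor.
Variables (G : topologicalType) (TG : tgroup G) (V : Type)
  (adj : V -> V -> Prop) (act : G -> V -> V) (d : nat) (a : V) (e : 'I_d -> V)
  (L : {group {perm 'I_d}}) (gT : finGroupType) (A : {group gT}).
Variables (X : set G) (h : G -> gT) (g : G) (v u0 : V).
Local Notation "x ** y" := (tmul TG x y) (at level 40, left associativity).
Local Notation inv := (tinv TG).
Local Notation one := (tone TG).
Hypothesis hact : is_graph_action TG adj act.
Hypothesis hL : local_action adj act a e L.
Hypothesis hX : is_subgroup TG X.
Hypothesis hM : forall x y, X x -> X y -> h (x ** y) = (h x * h y)%g.
Hypothesis hXA : forall b, b \in A <-> exists2 x, X x & h x = b.
Hypothesis hker : forall x, X x -> (forall u, adj v u -> act x u = u) -> h x = 1%g.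
Hypothesis hg : act g a = v.
Hypothesis hXv : forall x, X x -> act x v = v.
Hypothesis hadj : adj v u0.
Hypothesis hXu0 : forall x, X x -> act x u0 = u0.

Let hnb : nbhd_enum adj a e.
Proof. by case: hL. Qed.

Definition conj_g x := inv g ** x ** g.

Definition induces x (p : {perm 'I_d}) := forall i, act (conj_g x) (e i) = e (p i).

Lemma conj_gM x y : conj_g (x ** y) = conj_g x ** conj_g y.
Proof. by rewrite /conj_g -!(tmulA TG) (tmulA TG g) tmulgV tmul1g. Qed.

Lemma conj_g_fix_a x : X x -> act (conj_g x) a = a.
Proof. by move=> Xx; rewrite /conj_g !(gactM hact) hg hXv // -hg (gactK hact). Qed.

Lemma induces_act x p i : induces x p -> act x (act g (e i)) = act g (e (p i)).
Proof. by move=> xp; rewrite -xp /conj_g !(gactM hact) (gactKV hact). Qed.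

Lemma induces_ex x : X x -> exists p, induces x p.
Proof.
move=> Xx.
have ex i : exists j, e j = act (conj_g x) (e i).
  apply/(proj2 hnb); rewrite -(conj_g_fix_a Xx) -(gadj_act hact).
  by apply/(proj2 hnb); exists i.
pose f i := epsilon (inhabits i) (fun j => e j = act (conj_g x) (e i)).
have hf i : e (f i) = act (conj_g x) (e i) by exact: (epsilon_spec _ _ (ex i)).
have f_inj : injective f.
  move=> i1 i2 f12; apply: (proj1 hnb); apply: (gact_inj hact (g := conj_g x)).
  by rewrite -!hf f12.
by exists (perm f_inj) => i; rewrite permE hf.
Qed.

(* The action on the left composes in reverse order in {perm 'I_d}. *)
Lemma inducesM x y p t : induces x p -> induces y t -> induces (x ** y) (t * p)%g.
Proof. by move=> xp yt i; rewrite conj_gM (gactM hact) yt xp permM. Qed.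

Lemma induces1 : induces one 1%g.
Proof. by move=> i; rewrite perm1 /conj_g tmulg1 tmulVg (gact1 hact). Qed.

Definition induced := [set p : {perm 'I_d} | `[< exists2 x, X x & induces x p >]]%SET.

Lemma inducedP p : p \in induced <-> exists2 x, X x & induces x p.
Proof. by rewrite inE; split => /asboolP. Qed.

Lemma induced_group_set : group_set induced.
Proof.
apply/group_setP; split.
  by apply/inducedP; exists one; [exact: subgroup1 | exact: induces1].
move=> p t /inducedP[x Xx xp] /inducedP[y Xy yt]; apply/inducedP.
by exists (y ** x); [exact: subgroupM | exact: inducesM].
Qed.

Definition induced_grp := group induced_group_set.

(* h factors through the induced permutation: two elements inducing the same
   permutation differ by an element acting trivially around v. *)
Definition local_factor p :=
  (h (epsilon (inhabits one) (fun x => X x /\ induces x p)))^-1%g.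

Lemma local_factorE x p : X x -> induces x p -> local_factor p = (h x)^-1%g.
Proof.
move=> Xx xp; rewrite /local_factor.
set x' := epsilon _ _; have [Xx' x'p] : X x' /\ induces x' p.
  exact: (epsilon_spec _ (fun x => X x /\ induces x p) (ex_intro _ x (conj Xx xp))).
have Xz : X (inv x' ** x) by apply: subgroupM (subgroupV hX Xx') Xx.
have hz : h (inv x' ** x) = 1%g.
  apply: hker => // u /(nbhd_translate hact _ hnb hg)[i ->].
  by rewrite (gactM hact) (induces_act i xp) -(induces_act i x'p) (gactK hact).
move: hz; rewrite hM ?(fhomV hX hM) //; last exact: subgroupV.
by move/eqP; rewrite mulg_eq1 => /eqP ->.
Qed.

Lemma local_factorM : {in induced_grp &, {morph local_factor : p t / (p * t)%g}}.
Proof.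
move=> p t /inducedP[x Xx xp] /inducedP[y Xy yt].
rewrite (local_factorE Xx xp) (local_factorE Xy yt).
rewrite (local_factorE (subgroupM hX Xy Xx) (inducesM yt xp)).
by rewrite hM // invMg.
Qed.

Definition local_factorm := Morphism local_factorM.

Lemma local_factorm_im : (local_factorm @* induced_grp)%g = A.
Proof.
rewrite morphimEdom; apply/setP => b; apply/imsetP/idP.
  move=> [p /inducedP[x Xx xp] ->]; rewrite /= (local_factorE Xx xp) groupV.
  by apply/hXA; exists x.
move=> bA; have /hXA[x Xx hxb] := groupVr bA.
have [p xp] := induces_ex Xx.
by exists p; [apply/inducedP; exists x | rewrite /= (local_factorE Xx xp) hxb invgK].
Qed.

Lemma induced_sub_stab i0 : u0 = act g (e i0) -> induced_grp \subset 'C_L[i0 | 'P]%g.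
Proof.
move=> hi0; apply/fintype.subsetP => p /inducedP[x Xx xp].
rewrite inE; apply/andP; split.
  by apply/(proj2 hL); exists (conj_g x); split; [exact: conj_g_fix_a | exact: xp].
apply/astab1P; apply: (proj1 hnb) => /=.
by rewrite -xp /conj_g !(gactM hact) -hi0 hXu0 // hi0 (gactK hact).
Qed.

Lemma local_action_factor : exists (i : 'I_d) (H : {group {perm 'I_d}})
  (f : {morphism H >-> gT}), H \subset 'C_L[i | 'P]%g /\ (f @* H)%g = A.
Proof.
have [i0 hi0] := proj1 (nbhd_translate hact u0 hnb hg) hadj.
exists i0, induced_grp, local_factorm.
by split; [exact: induced_sub_stab | exact: local_factorm_im].
Qed.

End LocalFactor.

Section PullBack.
Variables (G : topologicalType) (TG : tgroup G) (V : Type)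
  (adj : V -> V -> Prop) (act : G -> V -> V) (d : nat)
  (Q : topologicalType) (TQ : tgroup Q) (pi : G -> Q)
  (a : V) (e : 'I_d -> V) (L : {group {perm 'I_d}})
  (gT : finGroupType) (A : {group gT}).
Local Notation "x ** y" := (tmul TG x y) (at level 40, left associativity).
Local Notation inv := (tinv TG).
Hypothesis hCA : cayley_abels TG adj act.
Hypothesis hQ : is_quotient_group TG (action_kernel act) TQ pi.
Hypothesis hL : local_action adj act a e L.

Local Notation Fx := (Fix TG adj act a e).

Let hnb : nbhd_enum adj a e.
Proof. by case: hL. Qed.
Let hact : is_graph_action TG adj act.
Proof. by case: hCA => _ [_ [_ []]]. Qed.
Let htrans : forall u v, exists g, act g u = v.
Proof. by case: hCA => _ [_ [_ [_ []]]]. Qed.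
Let hsym : forall x y, adj x y -> adj y x.
Proof. by case: hCA => [[]]. Qed.
Let piM : forall x y, pi (x ** y) = tmul TQ (pi x) (pi y).
Proof. by case: hQ. Qed.
Let pi_cont : continuous pi.
Proof. by case: hQ => _ [_ []]. Qed.

Lemma piK x : pi x = tone TQ <-> action_kernel act x.
Proof. by case: hQ => _ [_ [_ []]]. Qed.

Definition U := pi @` Fx 0.

Lemma U_subgroup : is_subgroup TQ U.
Proof. by apply: (thom_image_subgroup piM); exact: Fix_subgroup. Qed.

Lemma U_compact_open : compact_open_subgroup TQ U.
Proof.
split; last split; last exact: U_subgroup.
- apply: continuous_compact (Fix0_compact hCA hnb).
  exact: continuous_subspaceT.
- case: hQ => _ [_ [_ [open_pi _]]]; apply: open_pi.
  exact: Fix0_open hCA hnb.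
Qed.

(* Fix 0 contains the kernel, so it is the full preimage of U. *)
Lemma U_preimage x : U (pi x) -> Fx 0 x.
Proof.
move=> [y Fy pixy] j j0 u hu.
have hk : action_kernel act (x ** inv y).
  by apply/piK; rewrite piM (thomV piM) -pixy tmulgV.
by rewrite -{1}(gactK hact y u) -(gactM hact) hk (Fy j j0 u hu).
Qed.

Section CompositionFactor.
Variables (s : nat -> set Q) (n : nat) (f : Q -> gT).
Hypothesis hs0 : s 0%N = U.
Hypothesis hsS : forall k, closed (s k.+1) /\ normal_in TQ (s k.+1) (s k).
Hypothesis hfM : forall x y, s n x -> s n y -> f (tmul TQ x y) = (f x * f y)%g.
Hypothesis hfA : forall b, b \in A <-> exists2 x, s n x & f x = b.
Hypothesis hfK : forall x, s n x -> (f x = 1%g <-> s n.+1 x).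
Hypothesis hsA : simple A.

Lemma series_subgroup k : is_subgroup TQ (s k).
Proof.
by case: k => [|k]; [rewrite hs0; exact: U_subgroup | case: (hsS k) => _ []].
Qed.

Lemma series_sub_U k : s k `<=` U.
Proof.
elim: k => [|k IH]; first by rewrite hs0.
by case: (hsS k) => _ [_ [sub _]]; apply: subset_trans IH.
Qed.

Let T := pi @^-1` s n.
Let T' := pi @^-1` s n.+1.
Let h x := f (pi x).

Let T_subgroup : is_subgroup TG T.
Proof. by apply: (thom_preimage_subgroup piM); exact: series_subgroup. Qed.

Let T_Fix0 : T `<=` Fx 0.
Proof. by move=> x Tx; apply: U_preimage; exact: series_sub_U Tx. Qed.

Let T'_closed : closed T'.
Proof. by move: pi_cont (proj1 (hsS n)) => /continuous_closedP; apply. Qed.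

Let T'T : T' `<=` T.
Proof. by move=> x; case: (hsS n) => _ [_ [sub _]]; apply: sub. Qed.

Let hM x y : T x -> T y -> h (x ** y) = (h x * h y)%g.
Proof. by move=> Tx Ty; rewrite /h piM hfM. Qed.

Let hTA b : b \in A <-> exists2 x, T x & h x = b.
Proof.
rewrite hfA; split=> [[q sq <-]|[x Tx <-]]; last by exists (pi x).
case: hQ => _ [onto _]; have [x pixq] := onto q.
by exists x; rewrite /T /h /= pixq.
Qed.

Let h_in_A x : T x -> h x \in A.
Proof. by move=> Tx; apply/hTA; exists x. Qed.

Let hK x : T x -> (h x = 1%g <-> T' x).
Proof. exact: hfK. Qed.

(* An element of every Fix m acts trivially, so it maps to 1 in G/K. *)
Let T_lim x : T x -> (forall m, Fx m x) -> T' x.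
Proof.
move=> _ Fx_all; rewrite /T' /= (proj2 (piK x) (Fix_kernel hCA hnb Fx_all)).
exact: subgroup1 (series_subgroup n.+1).
Qed.

Let descent_point :
  exists m, onto_at Fx T h A m /\ forall x, Fx m.+1 x -> T x -> h x = 1%g.
Proof.
have [M nonto] := eventually_not_onto T_subgroup hM hsA (Fix0_compact hCA hnb)
  (Fix_closed hCA) (Fix_decr (e := e)) T_Fix0 T'_closed T'T hK T_lim.
apply: simple_descent (Fix_subgroup a e hCA) (Fix_norm hCA hnb) T_subgroup hM
  h_in_A hsA _ _ nonto.
by move=> b /hTA[x Tx hxb]; exists x; split=> //; exact: T_Fix0.
Qed.

(* The factor A is a quotient of a subgroup of a point stabilizer of L:
   apply the local factorization at v = w (m+1) to Fix m /\ T. *)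
Lemma composition_factor_local :
  exists (i : 'I_d) (H : {group {perm 'I_d}}) (f : {morphism H >-> gT}),
    H \subset 'C_L[i | 'P]%g /\ (f @* H)%g = A.
Proof.
have [m [ontom kill]] := descent_point.
have [b bA b1] : exists2 b, b \in A & b != 1%g.
  by apply/trivgPn; have [] := simpleP _ hsA.
pose v := w TG act a e m.+1; pose u0 := w TG act a e (m %/ d).
have fix_u0 x : Fx m x -> act x u0 = u0.
  by move=> Fx_x; apply: (Fx_x (m %/ d)); [exact: leq_div | left].
(* v <> u0, for otherwise Fix (m+1) = Fix m and h could not be onto. *)
have adj_v : adj v u0.
  case: (wS_nb hact htrans hnb m) => [v_u0|]; last exact: hsym.
  have [x [Fx_x Tx hxb]] := ontom b bA; move: b1; rewrite -hxb kill ?eqxx //.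
  apply: (Fix_succ Fx_x) => u; rewrite v_u0 => hu.
  by apply: (Fx_x (m %/ d)); first exact: leq_div.
have [g hg] := htrans a v.
apply: (local_action_factor (X := Fx m `&` T) hact hL _ _ _ _ hg _ adj_v).
- exact: subgroupI (Fix_subgroup a e hCA m) T_subgroup.
- by move=> x y [_ Tx] [_ Ty]; exact: hM.
- move=> c; split=> [/ontom[x [Fx_x Tx hxc]]|[x [_ Tx] <-]]; first by exists x.
  exact: h_in_A.
- move=> x [Fx_x Tx] fix_nbrs; apply: kill Tx; apply: (Fix_succ Fx_x) => u.
  by case=> [->|]; [exact: (Fix_next hCA hnb Fx_x) | exact: fix_nbrs].
- by move=> x [Fx_x _]; exact: (Fix_next hCA hnb Fx_x).
- by move=> x [Fx_x _]; exact: fix_u0.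
Qed.

End CompositionFactor.

End PullBack.

Section StabilizerSubquotient.
Local Open Scope group_scope.

Lemma lift_perm_onto n (i : 'I_n.+1) (s : {perm 'I_n.+1}) :
  s i = i -> exists t : {perm 'I_n}, lift_perm i i t = s.
Proof.
move=> si.
have s_lift k : s (lift i k) != i.
  apply/eqP => slk; move: (neq_lift i k).
  by rewrite (perm_inj (etrans slk (esym si))) eqxx.
pose tf k := odflt k (unlift i (s (lift i k))).
have tfE k : lift i (tf k) = s (lift i k).
  by rewrite /tf; case: unliftP (s_lift k) => [j -> //|->]; rewrite eqxx.
have tf_inj : injective tf.
  move=> k1 k2 eq_tf; apply: (@lift_inj _ i); apply: (@perm_inj _ s).
  by rewrite -!tfE eq_tf.
exists (perm tf_inj); apply/permP => x.
case: (unliftP i x) => [k ->|->]; last by rewrite lift_perm_id.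
by rewrite lift_perm_lift permE tfE.
Qed.

(* A quotient of a point stabilizer in S_d is a subquotient of S_(d-1):
   lift_perm identifies S_(d-1) with the stabilizer of i. *)
Lemma stabilizer_subquotient d (i : 'I_d) (H : {group {perm 'I_d}})
    (rT : finGroupType) (phi : {morphism H >-> rT}) (A : {group rT}) :
  H \subset 'C[i | 'P] -> phi @* H = A ->
  exists H' N' : {group {perm 'I_d.-1}}, normal N' H' /\ H' / N' \isog A.
Proof.
case: d i H phi => [[] //|n] i H phi H_stab phiA.
pose Hs := [set t : {perm 'I_n} | lift_perm i i t \in H]%SET.
have gHs : group_set Hs.
  apply/group_setP; split; first by rewrite inE lift_perm1 group1.
  by move=> x y; rewrite !inE => hx hy; rewrite -(lift_permM i i i) groupM.
pose psi t := phi (lift_perm i i t).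
have psiM : {in group gHs &, {morph psi : x y / x * y}}.
  by move=> x y; rewrite !inE => hx hy; rewrite /psi -(lift_permM i i i) morphM.
pose psim := Morphism psiM.
have psi_im : psim @* group gHs = A.
  rewrite -phiA !morphimEdom; apply/setP => b; apply/imsetP/imsetP.
    by move=> [t ht ->]; exists (lift_perm i i t); rewrite inE in ht.
  move=> [s Hs_s ->]; have /astab1P si := fintype.subsetP H_stab s Hs_s.
  have [t ts] := lift_perm_onto si.
  by exists t; [rewrite inE ts | rewrite /= /psi ts].
exists (group gHs), ('ker psim)%G; split; first exact: ker_normal.
by rewrite -psi_im; exact: first_isog.
Qed.

End StabilizerSubquotient.

Theorem theorem5p5
  (G : topologicalType) (TG : tgroup G)
  (hG : tdlc G) (hcg : compactly_generated TG)
  (V : Type) (adj : V -> V -> Prop) (act : G -> V -> V) (d : nat)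
  (hCA : cayley_abels TG adj act) (hdeg : regular_of_degree adj d)
  (Q : topologicalType) (TQ : tgroup Q) (pi : G -> Q)
  (hQ : is_quotient_group TG (action_kernel act) TQ pi)
  (a : V) (e : 'I_d -> V) (L : {group {perm 'I_d}})
  (hL : local_action adj act a e L)
  (gT : finGroupType) (A : {group gT})
  (hA : local_simple_content TQ A) :
  (exists (i : 'I_d) (H N : {group {perm 'I_d}}),
      [/\ H \subset 'C_L[i | 'P]%g, normal N H & (H / N)%g \isog A]) /\
  (exists H N : {group {perm 'I_d.-1}}, normal N H /\ (H / N)%g \isog A).
Proof.
case: hA => simpleA all_factors.
have [s [[s0 [sS _]] [n [_ [f [fM [fA fK]]]]]]] :=
  all_factors _ (U_compact_open hCA hQ hL).
have sS' k : closed (s k.+1) /\ normal_in TQ (s k.+1) (s k).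
  by case: (sS k) => [cl [nrm _]].
have [i [H [phi [H_stab phiA]]]] :=
  composition_factor_local hCA hQ hL s0 sS' fM fA fK simpleA.
split.
  exists i, H, ('ker phi)%G; split=> //; first exact: ker_normal.
  by rewrite -phiA; exact: first_isog.
apply: (stabilizer_subquotient (i := i) (phi := phi)) phiA.
exact: fintype.subset_trans H_stab (subsetIr _ _).
Qed.
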